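(* Assume $X_t>0$ for all $t\in\mathcal T$ and let $\alpha=\sum_tY_t/X_t$. Then $\max_{\delta\in[0,1]}\delta\big(1-\frac{\delta}{2}\alpha\big)=L(\alpha)$, attained at $\delta=\min\{1/\alpha,1\}$. Consequently, in the weakest-link game, any strategy $F^*_{\mathcal X}\in\mathbb F(\boldsymbol X)$ whose $c$-marginals are, for all $c$ and $\boldsymbol u\in\mathbb R^T_{\ge0}$, $F^*_{\mathcal X,c}(\boldsymbol u)=\min_t\min\{\frac{u_t}{2v_cX_t},1\}$ if $\alpha\le1$, and $F^*_{\mathcal X,c}(\boldsymbol u)=1-\frac1\alpha+\frac1\alpha\min_t\min\{\frac{u_t}{2v_cX_t\alpha},1\}$ if $\alpha>1$, satisfies $\pi_{\mathcal X}(F^*_{\mathcal X},F_{\mathcal Y})\ge L(\alpha)$ for every $F_{\mathcal Y}\in\mathbb F(\boldsymbol Y)$.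
   Context: Contests $\mathcal C=\{1,\dots,C\}$ with values $v_c>0$, $\sum_cv_c=1$; types $\mathcal T=\{1,\dots,T\}$; $\boldsymbol Y\in\mathbb R^T_{\ge0}$. $\mathbb F(\boldsymbol X)$ is the set of probability distributions $F$ on $\mathbb R^{CT}_{\ge0}$ (points $\mathbf x=(\boldsymbol x_c)_c$, $\boldsymbol x_c=(x_{c,t})_t$) with $\mathbb E_{\mathbf x\sim F}[\sum_cx_{c,t}]\le X_t$ for all $t$; similarly $\mathbb F(\boldsymbol Y)$. $c$-marginal: $F_c(\boldsymbol u)=\mathbb P_{\mathbf x\sim F}[x_{c,t}\le u_t\ \forall t]$. Weakest-link rule $W_{\mathrm{WL}}(\boldsymbol x,\boldsymbol y)=\mathbf 1\{x_t\ge y_t\ \forall t\}$; $\pi_{\mathcal X}(F_{\mathcal X},F_{\mathcal Y})=\mathbb E[\sum_cv_cW_{\mathrm{WL}}(\boldsymbol x_c,\boldsymbol y_c)]$ with independent $\mathbf x\sim F_{\mathcal X}$, $\mathbf y\sim F_{\mathcal Y}$. $L(\alpha)=1-\alpha/2$ for $\alpha\le1$, $L(\alpha)=1/(2\alpha)$ for $\alpha>1$. *)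

From HB Require Import structures.
From mathcomp Require Import all_boot all_order all_algebra.
From mathcomp Require Import all_classical all_reals all_analysis.
Set Implicit Arguments. Unset Strict Implicit. Unset Printing Implicit Defensive.
Import Order.TTheory GRing.Theory Num.Theory.
Local Open Scope ring_scope.
Local Open Scope classical_set_scope.

(* A pure strategy / allocation: a wl_point of R^{C T}, stored as a C-tuple of
   T-tuples of reals, equipped with the product (tuple) Borel sigma-algebra. *)
Definition wl_point (R : realType) (nC nT : nat) := nC.-tuple (nT.-tuple R).

Definition wl_coord (R : realType) (nC nT : nat) (x : wl_point R nC nT)
  (c : 'I_nC) (t : 'I_nT) : R := tnth (tnth x c) t.

Definition wl_in_FF (R : realType) (nC nT : nat)
  (F : probability (wl_point R nC nT) R) (X : 'I_nT -> R) : Prop :=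
  F [set x | forall c t, 0 <= wl_coord x c t] = 1%E /\
  forall t : 'I_nT, (\int[F]_x (\sum_(c < nC) wl_coord x c t)%:E <= (X t)%:E)%E.

Definition wl_marginal (R : realType) (nC nT : nat)
  (F : probability (wl_point R nC nT) R) (c : 'I_nC) (u : 'I_nT -> R) : \bar R :=
  F [set x | forall t, wl_coord x c t <= u t].

Definition wl_W (R : realType) (nT : nat) (x y : nT.-tuple R) : R :=
  if [forall t, tnth y t <= tnth x t] then 1 else 0.

(* Payoff pi_X(F_X, F_Y) = E[sum_c v_c wl_W(x_c, y_c)], x ~ F_X, y ~ F_Y
   independent (iterated integral against the product of the two laws). *)
Definition wl_payoffX (R : realType) (nC nT : nat) (v : 'I_nC -> R)
  (FX FY : probability (wl_point R nC nT) R) : \bar R :=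
  (\int[FX]_x \int[FY]_y (\sum_(c < nC) v c * wl_W (tnth x c) (tnth y c))%:E)%E.

Definition wl_Lfun (R : realType) (a : R) : R :=
  if a <= 1 then 1 - a / 2 else (2 * a)^-1.

(* delta* = min{1/alpha, 1}, with the convention 1/0 = +oo. *)
Definition wl_delta_star (R : realType) (a : R) : R :=
  if a <= 1 then 1 else a^-1.

From mathcomp Require Import all_boot all_order all_algebra.
From mathcomp Require Import all_classical all_reals all_analysis.
From mathcomp Require Import ring lra measurable_realfun.
Import Order.TTheory GRing.Theory Num.Theory.
Local Open Scope ring_scope.
Local Open Scope classical_set_scope.

(* With [k = max 1 alpha], both branches of the prescribed marginals read
   [F_c(u) = 1 - 1/k + (1/k) min_t min (u_t / (2 v_c X_t k)) 1].  Against a fixed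
   allocation [y], a union bound over the types shows that [x_c >= y_c] holds
   with probability at least [1/k - (1/k) sum_t y_{c,t}^+ / (2 v_c X_t k)].
   Weighting by [v_c] and summing over the contests gives a payoff of at least
   [1/k - sum_t (sum_c y_{c,t}^+) / (2 X_t k^2)], and averaging over [y ~ F_Y],
   whose mean type-[t] spending is at most [Y_t], leaves
   [1/k - alpha / (2 k^2) = L(alpha)]. *)

Lemma measurable_forall_le d (T : measurableType d) (R : realType) (I : finType)
    (f g : I -> T -> R) :
  (forall i, measurable_fun setT (f i)) -> (forall i, measurable_fun setT (g i)) ->
  measurable [set x | forall i, f i x <= g i x].
Proof.
move=> mf mg.
have -> : [set x | forall i, f i x <= g i x] =
    \bigcap_(i in [set: I]) [set x | f i x <= g i x].
  by apply/seteqP; split=> x /= fg i => [_|]; apply: fg.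
apply: fin_bigcap_measurable => [|i _]; first exact: finite_finset.
by rewrite -[X in measurable X]setTI; apply: measurable_fun_le.
Qed.

Lemma measurable_wl_coord (R : realType) nC nT (c : 'I_nC) (t : 'I_nT) :
  measurable_fun setT (fun x : wl_point R nC nT => wl_coord x c t).
Proof. exact: measurableT_comp (measurable_tnth t) (measurable_tnth c). Qed.

Section RealProbability.
Context {d : measure_display} {T : measurableType d} {R : realType}.
Variable P : probability T R.

Definition prR (A : set T) : R := fine (P A).

Lemma prRE A : measurable A -> P A = (prR A)%:E.
Proof.
move=> mA; rewrite fineK // ge0_fin_numE //.
by rewrite (le_lt_trans (probability_le1 _ mA)) ?ltey.
Qed.

Lemma prR_ge0 A : 0 <= prR A.
Proof. exact: fine_ge0. Qed.

Lemma prR_setT : prR setT = 1.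
Proof. by rewrite /prR probability_setT. Qed.

Lemma le_prR {A B} : measurable A -> measurable B -> A `<=` B -> prR A <= prR B.
Proof. by move=> mA mB AB; rewrite -lee_fin -!prRE // le_measure ?inE. Qed.

Lemma prRC A : measurable A -> prR (~` A) = 1 - prR A.
Proof.
move=> mA; apply/EFin_inj; rewrite EFinB -!prRE ?probability_setC //.
exact: measurableC.
Qed.

Lemma prRD {A B} : measurable A -> measurable B -> A `<=` B ->
  prR (B `\` A) = prR B - prR A.
Proof.
move=> mA mB AB; apply/EFin_inj; rewrite EFinB -!prRE //; last exact: measurableD.
rewrite measureD ?(setIidr AB) //.
by rewrite (le_lt_trans (probability_le1 _ mB)) ?ltey.
Qed.

Lemma prRU {A B} : measurable A -> measurable B -> prR (A `|` B) <= prR A + prR B.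
Proof.
move=> mA mB; rewrite -lee_fin EFinD -!prRE ?measureU2 //.
exact: measurableU.
Qed.

Lemma prR_bigsetU {n} {E : 'I_n -> set T} : (forall i, measurable (E i)) ->
  prR (\big[setU/set0]_(i < n) E i) <= \sum_(i < n) prR (E i).
Proof.
move=> mE.
suff [] : measurable (\big[setU/set0]_(i < n) E i) /\
          prR (\big[setU/set0]_(i < n) E i) <= \sum_(i < n) prR (E i) by [].
apply: (big_ind2 (fun A s => measurable A /\ prR A <= s)) => //.
- by rewrite /prR measure0.
- move=> A s B s' [mA As] [mB Bs']; split; first exact: measurableU.
  by rewrite (le_trans (prRU mA mB)) ?lerD.
Qed.

End RealProbability.

Section MixedCdfLowerBound.
Context {d : measure_display} {T : measurableType d} {R : realType}.
Context {n : nat}.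
Variables (P : probability T R) (g : 'I_n -> T -> R).
Hypothesis mg : forall t, measurable_fun setT (g t).
Variables (k : R) (b : 'I_n -> R).
Hypotheses (k_ge1 : 1 <= k) (b_gt0 : forall t, 0 < b t).

Let below (u : 'I_n -> R) := [set x | forall t, g t x <= u t].
Let above (u : 'I_n -> R) := [set x | forall t, u t <= g t x].
Let bump (t : 'I_n) (a : R) (s : 'I_n) := if s == t then a else b s.

Let measurable_below u : measurable (below u).
Proof. by apply: measurable_forall_le => // t; exact: measurable_cst. Qed.

Let measurable_above u : measurable (above u).
Proof. by apply: measurable_forall_le => // t; exact: measurable_cst. Qed.

(* Outside [above z], a point either exceeds [b], or lies below [0], or drops
   under [w t] in one coordinate [t] while staying below [b] in the others. *)
Lemma union_bound_above {z w : 'I_n -> R} :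
  (forall t, z t <= w t) -> (forall t, 0 <= w t) ->
  1 <= prR P (above z) + prR P (~` below b) + prR P (below (fun=> 0)) +
       \sum_(t < n) (prR P (below (bump t (w t))) - prR P (below (fun=> 0))).
Proof.
move=> zw w_ge0; set B := below (fun=> 0).
have B_bump t : B `<=` below (bump t (w t)).
  move=> x Bx s; rewrite /bump; case: eqP => [->|_].
    exact: le_trans (Bx t) (w_ge0 t).
  exact: le_trans (Bx s) (ltW (b_gt0 s)).
have cover : [set: T] `<=` above z `|` ~` below b `|` B `|`
    \big[setU/set0]_(t < n) (below (bump t (w t)) `\` B).
  move=> x _; have [|zx] := pselect (above z x); first by do 3 left.
  have [xb|] := pselect (below b x); last by do 2 left; right.
  have [|xB] := pselect (B x); first by left; right.
  right; have [t /negP] : exists t, ~ (z t <= g t x).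
    by apply/existsNP => all_le; apply: zx => t; apply: all_le.
  rewrite -ltNge => gz.
  rewrite (bigD1 t) //=; left; split=> // s; rewrite /bump.
  by case: eqP => [->|_]; [exact: ltW (lt_le_trans gz (zw t)) | exact: xb].
have mA := measurable_above z; have mB := measurable_below (fun=> 0).
have mGc : measurable (~` below b) by exact/measurableC/measurable_below.
have mD t : measurable (below (bump t (w t)) `\` B) by exact: measurableD.
have mU : measurable (\big[setU/set0]_(t < n) (below (bump t (w t)) `\` B)).
  by apply: bigsetU_measurable => t _; exact: mD.
have mAG := measurableU _ _ mA mGc; have mAGB := measurableU _ _ mAG mB.
rewrite -(prR_setT P); apply: le_trans (le_prR P measurableT _ cover) _.
  exact: measurableU.
apply: le_trans (prRU P mAGB mU) _; rewrite lerD //.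
  by apply: le_trans (prRU P mAG mB) _; rewrite lerD2r prRU.
apply: le_trans (prR_bigsetU P mD) _; apply: ler_sum => t _.
by rewrite (prRD P mB).
Qed.

Hypothesis cdfE : forall u, (forall t, 0 <= u t) ->
  prR P (below u) =
  1 - k^-1 + k^-1 * \big[Order.min/1]_(t < n) Order.min (u t / b t) 1.

Lemma prR_above_ge (z : 'I_n -> R) :
  k^-1 - k^-1 * \sum_(t < n) Num.max (z t) 0 / b t <= prR P (above z).
Proof.
have k_gt0 : 0 < k^-1 by rewrite invr_gt0 (lt_le_trans ltr01).
have [n0|n_gt0] := posnP n.
  have no_ord (t : 'I_n) : False by case: t => m; rewrite n0.
  have -> : above z = setT by apply/seteqP; split=> // x _ t; case: (no_ord t).
  rewrite prR_setT big1 => [|t]; last by case: (no_ord t).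
  by rewrite mulr0 subr0 invf_le1 // (lt_le_trans ltr01).
have bigmin_cst (a : R) : a <= 1 -> \big[Order.min/1]_(t < n) a = a.
  move=> a_le1; apply/le_anti.
  by rewrite (bigmin_le _ (Ordinal n_gt0) (fun=> a)) /= le_bigmin.
set w := fun t => Num.max (z t) 0.
have w_ge0 t : 0 <= w t by rewrite le_max lexx orbT.
have below_b : prR P (below b) = 1.
  rewrite cdfE => [|t]; last exact: ltW.
  under eq_bigr => t _ do rewrite divff ?(gt_eqF (b_gt0 t)) // minxx.
  by rewrite bigmin_cst // mulr1 subrK.
have below_0 : prR P (below (fun=> 0)) = 1 - k^-1.
  rewrite cdfE // (eq_bigr (fun=> 0)) => [|t _]; last by rewrite mul0r min_l.
  by rewrite bigmin_cst // mulr0 addr0.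
have below_bump t :
    prR P (below (bump t (w t))) <= 1 - k^-1 + k^-1 * (w t / b t).
  rewrite cdfE => [|s]; last first.
    by rewrite /bump; case: eqP => _; [exact: w_ge0|exact: ltW].
  rewrite lerD2l; apply: ler_wpM2l; first exact: ltW.
  by apply: le_trans (bigmin_le _ t _) _; rewrite /bump eqxx ge_min lexx.
have z_le_w t : z t <= w t by rewrite le_max lexx.
have := union_bound_above z_le_w w_ge0.
rewrite prRC ?below_b ?below_0 ?subrr ?addr0; last exact: measurable_below.
have : \sum_(t < n) (prR P (below (bump t (w t))) - (1 - k^-1)) <=
       k^-1 * \sum_(t < n) w t / b t.
  by rewrite mulr_sumr; apply: ler_sum => t _; have := below_bump t; lra.
lra.
Qed.

End MixedCdfLowerBound.

Definition wl_winset {R : realType} {nC nT} (y : wl_point R nC nT) (c : 'I_nC) :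
  set (wl_point R nC nT) := [set x | forall t, wl_coord y c t <= wl_coord x c t].

Section WeakestLinkPayoff.
Context {R : realType} {nC nT : nat}.
Local Notation point := (wl_point R nC nT).

Lemma measurable_wl_winset (y : point) c : measurable (wl_winset y c).
Proof.
apply: measurable_forall_le => t; first exact: measurable_cst.
exact: measurable_wl_coord.
Qed.

Lemma wl_W_indic (x y : point) c :
  wl_W (tnth x c) (tnth y c) = \1_(wl_winset y c) x.
Proof.
rewrite /wl_W indicE; case: forallP => [yx|yx]; first by rewrite mem_set.
by rewrite memNset // => win; apply: yx => t; exact: win.
Qed.

Lemma measurable_wl_payoff (v : 'I_nC -> R) :
  measurable_fun setT (fun z : point * point =>
    (\sum_(c < nC) v c * wl_W (tnth z.1 c) (tnth z.2 c))%:E).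
Proof.
apply/measurable_EFinP; apply: measurable_sum => c.
apply: measurable_funM; first exact: measurable_cst.
under eq_fun do rewrite wl_W_indic.
apply: measurable_indic; apply: measurable_forall_le => t.
  exact: measurableT_comp (measurable_wl_coord _ _ _ c t) measurable_snd.
exact: measurableT_comp (measurable_wl_coord _ _ _ c t) measurable_fst.
Qed.

Lemma wl_payoff_ge0 {v : 'I_nC -> R} : (forall c, 0 <= v c) ->
  forall z : point * point,
    (0 <= (\sum_(c < nC) v c * wl_W (tnth z.1 c) (tnth z.2 c))%:E)%E.
Proof.
move=> v_ge0 z; rewrite lee_fin; apply: sumr_ge0 => c _.
by rewrite mulr_ge0 // /wl_W; case: ifP.
Qed.

Lemma integral_wl_payoff (v : 'I_nC -> R) (FX : probability point R) (y : point) :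
  (forall c, 0 <= v c) ->
  (\int[FX]_x (\sum_(c < nC) v c * wl_W (tnth x c) (tnth y c))%:E =
   (\sum_(c < nC) v c * prR FX (wl_winset y c))%:E)%E.
Proof.
move=> v_ge0; under eq_integral do rewrite -sumEFin.
have mW c : measurable_fun setT (fun x : point => (\1_(wl_winset y c) x)%:E).
  by apply/measurable_EFinP/measurable_indic; exact: measurable_wl_winset.
rewrite ge0_integral_sum => [||c|c x _] //; last 2 first.
- by under eq_fun do rewrite wl_W_indic EFinM; exact: emeasurable_funM.
- by rewrite wl_W_indic lee_fin mulr_ge0.
rewrite -sumEFin; apply: eq_bigr => c _.
under eq_integral do rewrite wl_W_indic EFinM.
rewrite ge0_integralZl ?lee_fin //.
have mwin := measurable_wl_winset y c.
by rewrite integral_indic // setIT EFinM -prRE.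
Qed.

Lemma wl_payoffX_swap (v : 'I_nC -> R) (FX FY : probability point R) :
  (forall c, 0 <= v c) ->
  wl_payoffX v FX FY =
  (\int[FY]_y (\sum_(c < nC) v c * prR FX (wl_winset y c))%:E)%E.
Proof.
move=> v_ge0; rewrite /wl_payoffX.
rewrite (fubini_tonelli (fun z : point * point =>
  (\sum_(c < nC) v c * wl_W (tnth z.1 c) (tnth z.2 c))%:E)) /=.
- by apply: eq_integral => y _; exact: integral_wl_payoff.
- exact: measurable_wl_payoff.
- exact: wl_payoff_ge0.
Qed.

End WeakestLinkPayoff.

Definition wl_spent {R : realType} {nC nT} (y : wl_point R nC nT) (t : 'I_nT) :
  R := \sum_(c < nC) Num.max (wl_coord y c t) 0.

Lemma wl_spent_ge0 (R : realType) nC nT (y : wl_point R nC nT) t :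
  0 <= wl_spent y t.
Proof. by apply: sumr_ge0 => c _; rewrite le_max lexx orbT. Qed.

Lemma measurable_wl_spent (R : realType) nC nT (t : 'I_nT) :
  measurable_fun setT (fun y : wl_point R nC nT => wl_spent y t).
Proof.
apply: measurable_sum => c.
exact: measurable_maxr (measurable_wl_coord _ _ _ c t) (measurable_cst _).
Qed.

(* On the nonnegative orthant, where [FY] lives, [wl_spent y t] is the total
   type-[t] allocation, whose mean is at most [Y t]. *)
Lemma integral_wl_spent_le (R : realType) nC nT (Y : 'I_nT -> R)
    (FY : probability (wl_point R nC nT) R) t :
  wl_in_FF FY Y -> (\int[FY]_y (wl_spent y t)%:E <= (Y t)%:E)%E.
Proof.
case=> FY_orthant FY_mean.
set S := [set y : wl_point R nC nT | forall c t, 0 <= wl_coord y c t].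
have mS : measurable S.
  have -> : S = [set y | forall p : 'I_nC * 'I_nT, 0 <= wl_coord y p.1 p.2].
    by apply/seteqP; split=> y Sy => [[c s]|c s] //; exact: (Sy (c, s)).
  apply: measurable_forall_le => p; first exact: measurable_cst.
  exact: measurable_wl_coord.
rewrite (@ae_eq_integral _ _ _ FY setT
  (fun y => (\sum_(c < nC) wl_coord y c t)%:E)) //.
- by apply/measurable_EFinP; exact: measurable_wl_spent.
- apply/measurable_EFinP; apply: measurable_sum => c.
  exact: measurable_wl_coord.
- exists (~` S); split; first exact: measurableC.
    by have := probability_setC FY mS; rewrite FY_orthant subee.
  move=> y /= spentN Sy; apply: spentN => _; congr (_%:E); apply: eq_bigr => c _.
  exact/max_idPl/Sy.
Qed.

Section WeakestLinkLowerBound.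
Variables (R : realType) (nC nT : nat) (v : 'I_nC -> R) (X : 'I_nT -> R) (k : R).
Hypotheses (v_gt0 : forall c, 0 < v c) (v_sum1 : \sum_(c < nC) v c = 1).
Hypotheses (X_gt0 : forall t, 0 < X t) (k_ge1 : 1 <= k).
Local Notation point := (wl_point R nC nT).
Variable FX : probability point R.
Hypothesis marginalE : forall c (u : 'I_nT -> R), (forall t, 0 <= u t) ->
  wl_marginal FX c u = (1 - k^-1 + k^-1 *
    \big[Order.min/1]_(t < nT) Order.min (u t / (2 * v c * X t * k)) 1)%:E.

Let k_gt0 : 0 < k := lt_le_trans ltr01 k_ge1.

Lemma wl_win_prob_ge (y : point) :
  k^-1 - \sum_(t < nT) (2 * X t * k * k)^-1 * wl_spent y t <=
  \sum_(c < nC) v c * prR FX (wl_winset y c).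
Proof.
have win_ge c : k^-1 - k^-1 *
    \sum_(t < nT) Num.max (wl_coord y c t) 0 / (2 * v c * X t * k) <=
    prR FX (wl_winset y c).
  have b_gt0 t : 0 < 2 * v c * X t * k by rewrite !mulr_gt0.
  rewrite /wl_winset; apply: (prR_above_ge FX (fun t x => wl_coord x c t)
    (measurable_wl_coord _ _ _ c) _ _ k_ge1 b_gt0) => u u_ge0.
  by rewrite /prR -[FX _]/(wl_marginal FX c u) marginalE.
have sumE : \sum_(c < nC) v c * (k^-1 - k^-1 *
      \sum_(t < nT) Num.max (wl_coord y c t) 0 / (2 * v c * X t * k)) =
    k^-1 - \sum_(t < nT) (2 * X t * k * k)^-1 * wl_spent y t.
  under eq_bigr => c _ do rewrite mulrBr mulr_sumr mulr_sumr.
  rewrite sumrB -mulr_suml v_sum1 mul1r exchange_big /=; congr (_ - _).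
  apply: eq_bigr => t _; rewrite /wl_spent mulr_sumr; apply: eq_bigr => c _.
  set m := Num.max _ _; field.
  by rewrite !gt_eqF ?v_gt0 ?X_gt0.
by rewrite -sumE; apply: ler_sum => c _; rewrite ler_wpM2l ?win_ge ?ltW.
Qed.

Lemma integral_wl_spent_weighted_le (Y : 'I_nT -> R) (FY : probability point R) :
  wl_in_FF FY Y ->
  (\int[FY]_y (\sum_(t < nT) (2 * X t * k * k)^-1 * wl_spent y t)%:E <=
   ((\sum_(t < nT) Y t / X t) / (2 * k * k))%:E)%E.
Proof.
move=> FY_Y; have w_ge0 t : 0 <= (2 * X t * k * k)^-1.
  by rewrite invr_ge0 ltW // !mulr_gt0.
have mw t : measurable_fun setT (fun y : point => (wl_spent y t)%:E).
  by apply/measurable_EFinP; exact: measurable_wl_spent.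
under eq_integral do rewrite -sumEFin.
rewrite ge0_integral_sum => [||t|t y _] //; first last.
- by rewrite lee_fin mulr_ge0 ?wl_spent_ge0.
- by under eq_fun do rewrite EFinM; exact: emeasurable_funM.
rewrite mulr_suml -sumEFin; apply: lee_sum => t _.
under eq_integral do rewrite EFinM.
rewrite ge0_integralZl ?lee_fin // => [|y _]; last by rewrite lee_fin wl_spent_ge0.
have -> : Y t / X t / (2 * k * k) = (2 * X t * k * k)^-1 * Y t.
  by field; rewrite !gt_eqF ?X_gt0.
by rewrite EFinM lee_wpmul2l ?lee_fin // integral_wl_spent_le.
Qed.

Lemma wl_payoffX_ge (Y : 'I_nT -> R) (FY : probability point R) :
  wl_in_FF FY Y ->
  ((k^-1 - (\sum_(t < nT) Y t / X t) / (2 * k * k))%:E <= wl_payoffX v FX FY)%E.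
Proof.
move=> FY_Y; have v_ge0 c : 0 <= v c by exact: ltW.
rewrite wl_payoffX_swap //; have win := wl_win_prob_ge.
set G := fun y : point => \sum_(c < nC) v c * prR FX (wl_winset y c).
set H := fun y : point => \sum_(t < nT) (2 * X t * k * k)^-1 * wl_spent y t.
have G_ge0 y : 0 <= G y by apply: sumr_ge0 => c _; rewrite mulr_ge0 ?prR_ge0.
have H_ge0 y : 0 <= H y.
  apply: sumr_ge0 => t _; rewrite mulr_ge0 ?wl_spent_ge0 //.
  by rewrite invr_ge0 ltW // !mulr_gt0.
have mG : measurable_fun setT (fun y => (G y)%:E).
  have -> : (fun y => (G y)%:E) = fubini_G FX (fun z : point * point =>
      (\sum_(c < nC) v c * wl_W (tnth z.1 c) (tnth z.2 c))%:E).
    by apply/funext => y; rewrite /fubini_G integral_wl_payoff.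
  exact: measurable_fun_fubini_tonelli_G _ (measurable_wl_payoff v)
    (wl_payoff_ge0 v_ge0).
have mH : measurable_fun setT (fun y => (H y)%:E).
  apply/measurable_EFinP; apply: measurable_sum => t.
  exact: measurable_funM (measurable_cst _) (measurable_wl_spent _ _ _ t).
have int_cst : (\int[FY]_y (k^-1)%:E = (k^-1)%:E)%E.
  rewrite integral_cst // [X in (_ * X)%E](_ : _ = 1%E) ?mule1 //.
  exact: probability_setT.
have : ((k^-1)%:E <= \int[FY]_y (G y)%:E + \int[FY]_y (H y)%:E)%E.
  rewrite -int_cst -ge0_integralD //.
  apply: ge0_le_integral => //.
  - by move=> y _; rewrite lee_fin invr_ge0 ltW.
  - exact: emeasurable_funD.
  - by move=> y _; rewrite -EFinD lee_fin /G /H; have := win y; lra.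
  - by move=> y _; rewrite lee_fin.
  - by move=> y _; rewrite lee_fin.
move=> ineq; rewrite EFinB leeBlDr //; apply: le_trans ineq _.
by apply: leeD => //; exact: integral_wl_spent_weighted_le.
Qed.

End WeakestLinkLowerBound.

Section ValueFunction.
Variables (R : realType) (a : R).

(* The gap [wl_Lfun a - delta (1 - delta a / 2)] equals
   [(1 - delta) (2 - a (1 + delta)) / 2] for [a <= 1]
   and [(a delta - 1)^2 / (2 a)] for [a > 1]. *)
Lemma wl_Lfun_ge (delta : R) :
  0 <= delta <= 1 -> delta * (1 - delta / 2 * a) <= wl_Lfun a.
Proof.
move=> /andP[d_ge0 d_le1]; rewrite /wl_Lfun; case: ifPn => [a_le1|].
  have : 0 <= (1 - delta) * (2 - a * (1 + delta)) by apply: mulr_ge0; nra.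
  nra.
rewrite -ltNge => a_gt1.
have -> : (2 * a)^-1 = a^-1 / 2 by rewrite invfM mulrC.
have : 0 <= (a * delta - 1) ^+ 2 by exact: sqr_ge0.
have : a * a^-1 = 1 by rewrite mulfV // gt_eqF // (lt_trans ltr01).
nra.
Qed.

Lemma wl_delta_star_in01 : 0 <= wl_delta_star a <= 1.
Proof.
rewrite /wl_delta_star; case: ifPn => [|a_gt1]; first by rewrite ler01 lexx.
rewrite -ltNge in a_gt1.
by rewrite invr_ge0 ltW ?invf_le1 ?ltW //= (lt_trans ltr01).
Qed.

Lemma wl_Lfun_delta_star :
  wl_delta_star a * (1 - wl_delta_star a / 2 * a) = wl_Lfun a.
Proof.
rewrite /wl_delta_star /wl_Lfun; case: ifPn => [_|a_gt1]; first by field.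
by field; rewrite gt_eqF // (lt_trans ltr01) // ltNge.
Qed.

Lemma wl_Lfun_maxE :
  wl_Lfun a = (Num.max 1 a)^-1 - a / (2 * Num.max 1 a * Num.max 1 a).
Proof.
rewrite /wl_Lfun; case: ifPn => [a_le1|a_gt1].
  by rewrite max_l // invr1 !mulr1.
rewrite -ltNge in a_gt1; rewrite max_r ?ltW //.
by field; rewrite gt_eqF // (lt_trans ltr01).
Qed.

End ValueFunction.

Theorem lemma6 (R : realType) (nC nT : nat) (v : 'I_nC -> R)
  (X Y : 'I_nT -> R)
  (hv : forall c, 0 < v c) (hv1 : \sum_(c < nC) v c = 1)
  (hX : forall t, 0 < X t) (hY : forall t, 0 <= Y t) :
  let alpha := \sum_(t < nT) Y t / X t in
  ((forall delta : R, 0 <= delta <= 1 ->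
      delta * (1 - delta / 2 * alpha) <= wl_Lfun alpha) /\
   0 <= wl_delta_star alpha <= 1 /\
   wl_delta_star alpha * (1 - wl_delta_star alpha / 2 * alpha) = wl_Lfun alpha) /\
  (forall FX : probability (wl_point R nC nT) R,
     wl_in_FF FX X ->
     (forall (c : 'I_nC) (u : 'I_nT -> R), (forall t, 0 <= u t) ->
        wl_marginal FX c u =
        (if alpha <= 1 then
           \big[Order.min/1]_(t < nT) Order.min (u t / (2 * v c * X t)) 1
         else
           1 - alpha^-1 + alpha^-1 *
           \big[Order.min/1]_(t < nT)
              Order.min (u t / (2 * v c * X t * alpha)) 1)%:E) ->
     forall FY : probability (wl_point R nC nT) R,
       wl_in_FF FY Y -> (wl_payoffX v FX FY >= (wl_Lfun alpha)%:E)%E).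
Proof.
move=> alpha; split.
  split; first exact: wl_Lfun_ge.
  by split; [exact: wl_delta_star_in01|exact: wl_Lfun_delta_star].
move=> FX _ FX_marginal FY FY_Y; rewrite wl_Lfun_maxE.
apply: wl_payoffX_ge => // [|c u u_ge0]; first by rewrite le_max lexx.
rewrite FX_marginal //; case: ifPn => [a_le1|a_gt1].
  rewrite max_l // invr1 subrr add0r mul1r.
  by congr (_%:E); apply: eq_bigr => t _; rewrite mulr1.
by rewrite -ltNge in a_gt1; rewrite max_r ?ltW.
Qed.
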